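(* For $n\in\mathbb{N}$ let $(U_k^{(n)})_{k\in\mathbb{N}}$ be independent random variables uniformly distributed on $\{1,\dots,n\}$. Assume $m_n\to\infty$ and $m_n=o(n)$ as $n\to\infty$. Then $${\rm Var}\Bigl(\sum_{m_n<p\le n,\ p\ \text{prime}}\log p\Bigl(\sum_{k=1}^{m_n}\mathbbm{1}_{\{\lambda_p(U_k^{(n)})\ge1\}}-\mathbbm{1}_{\{\max_{1\le k\le m_n}\lambda_p(U_k^{(n)})\ge1\}}\Bigr)\Bigr)=O(m_n\log m_n),\qquad n\to\infty.$$
   Context: For a prime $p$ and $k\in\mathbb{N}$, $\lambda_p(k)$ is the exponent of $p$ in the prime factorization of $k$. *)

From HB Require Import structures.
From mathcomp Require Import all_boot all_order all_algebra.
From mathcomp Require Import reals exp.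
Set Implicit Arguments. Unset Strict Implicit. Unset Printing Implicit Defensive.
Import Order.TTheory GRing.Theory Num.Theory.
Local Open Scope ring_scope.

(* A sample (U_1,...,U_m) of m independent uniform variables on {1,...,n} is
   an element u of {ffun 'I_m -> 'I_n}, with U_{k+1} = (u k) + 1; the joint law
   is the uniform law on this finite product space. *)
Definition Uval (n m : nat) (u : {ffun 'I_m -> 'I_n}) (k : 'I_m) : nat :=
  (val (u k)).+1.

Definition lambda (p k : nat) : nat := logn p k.

Definition Xsum (R : realType) (n m : nat) (u : {ffun 'I_m -> 'I_n}) : R :=
  \sum_(p < n.+1 | prime p && (m < p)%N)
     ln (p%:R : R) *
       (((\sum_(k < m) (1 <= lambda p (Uval u k)) : nat)%N)%:R
        - ((1 <= \max_(k < m) lambda p (Uval u k))%N : nat)%:R).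

Definition Expect (R : realType) (n m : nat) (f : {ffun 'I_m -> 'I_n} -> R) : R :=
  (\sum_(u : {ffun 'I_m -> 'I_n}) f u) / (#|{ffun 'I_m -> 'I_n}|)%:R.

Definition Var (R : realType) (n m : nat) (f : {ffun 'I_m -> 'I_n} -> R) : R :=
  Expect (fun u => (f u - Expect f) ^+ 2).

From HB Require Import structures.
From mathcomp Require Import all_boot all_order all_algebra.
From mathcomp Require Import reals exp.
From mathcomp Require Import zify ring lra.
Set Implicit Arguments. Unset Strict Implicit. Unset Printing Implicit Defensive.
Import Order.TTheory GRing.Theory Num.Theory.
Local Open Scope ring_scope.

(* Let X_k be X with U_k reset to 1. By the Efron-Stein inequality,
   Var X <= sum_k E[(X - X_k)^2]. Resetting U_k changes the summand of a prime
   p only if p divides U_k and some other U_i, so X - X_k is [overlap k] =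
   sum_p ln p [p | U_k and p | U_i for some i <> k]. Since the U_i are
   independent and P(d | U) <= 1/d, a union bound gives
   E[overlap_k^2] <= m S1 + (m S2)^2 with S1 = sum_{p>m} ln^2 p / p^2 and
   S2 = sum_{p>m} ln p / p^2. Chebyshev's estimate sum_{x<p<=2x} ln p <= x ln 4
   (the primes in (x, 2x] divide binomial(2x, x)), summed over the dyadic
   blocks (2^j m, 2^(j+1) m], gives m S1 = O(ln m), and S2 <= S1 / ln m gives
   m S2 = O(1); hence Var X = O(m ln m). *)

(** * Uniform means and the Efron-Stein inequality *)

Section Mean.
Variables (R : realFieldType) (T : finType).
Implicit Types (f g : T -> R) (c : R).

(* [Expect] and [Var] are [mean] on the sample space, up to conversion. *)
Definition mean f : R := (\sum_t f t) / #|T|%:R.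

Lemma eq_mean f g : f =1 g -> mean f = mean g.
Proof. by move=> fg; rewrite /mean (eq_bigr _ (fun t _ => fg t)). Qed.

Lemma meanD f g : mean (fun t => f t + g t) = mean f + mean g.
Proof. by rewrite /mean big_split mulrDl. Qed.

Lemma meanN f : mean (fun t => - f t) = - mean f.
Proof. by rewrite /mean sumrN mulNr. Qed.

Lemma meanB f g : mean (fun t => f t - g t) = mean f - mean g.
Proof. by rewrite meanD meanN. Qed.

Lemma meanZ c f : mean (fun t => c * f t) = c * mean f.
Proof. by rewrite /mean -mulr_sumr mulrA. Qed.

Lemma mean_sum (I : Type) (r : seq I) (P : pred I) (F : I -> T -> R) :
  mean (fun t => \sum_(i <- r | P i) F i t) = \sum_(i <- r | P i) mean (F i).
Proof. by rewrite /mean exchange_big mulr_suml. Qed.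

Lemma ler_mean f g : (forall t, f t <= g t) -> mean f <= mean g.
Proof. by move=> fg; rewrite ler_wpM2r ?invr_ge0 ?ler0n // ler_sum. Qed.

Lemma mean_ge0 f : (forall t, 0 <= f t) -> 0 <= mean f.
Proof. by move=> f0; rewrite divr_ge0 ?ler0n ?sumr_ge0. Qed.

Hypothesis T_gt0 : (0 < #|T|)%N.

Lemma mean_cst c : mean (fun=> c) = c.
Proof. by rewrite /mean sumr_const -[_ *+ _]mulr_natr mulfK // pnatr_eq0 -lt0n. Qed.

Lemma mean_sqr_centered f :
  mean (fun t => (f t - mean f) ^+ 2) = mean (fun t => f t ^+ 2) - mean f ^+ 2.
Proof.
rewrite (@eq_mean _ (fun t => f t ^+ 2 - 2 * mean f * f t + mean f ^+ 2)); last by move=> t; ring.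
by rewrite meanD meanB meanZ mean_cst; ring.
Qed.

Lemma sqr_mean_le f : mean f ^+ 2 <= mean (fun t => f t ^+ 2).
Proof.
by rewrite -subr_ge0 -mean_sqr_centered mean_ge0 // => t; apply: sqr_ge0.
Qed.

End Mean.

Section ProductSpace.
Variables (R : realFieldType) (T : finType) (m : nat).
Hypothesis T_gt0 : (0 < #|T|)%N.
Local Notation sample := {ffun 'I_m -> T}.
Implicit Types (u v : sample) (g h : sample -> R).

Lemma card_sample_gt0 : (0 < #|{ffun 'I_m -> T}|)%N.
Proof. by rewrite card_ffun expn_gt0 T_gt0. Qed.

(* Coordinates are indexed by [nat] so that [avg_below] can recurse on them;
   an index [j >= m] leaves [u] unchanged. *)
Definition upd u (j : nat) (t : T) : sample :=
  [ffun i : 'I_m => if val i == j then t else u i].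

Lemma upd_eq u (k : 'I_m) t : upd u k t k = t.
Proof. by rewrite ffunE eqxx. Qed.

Lemma upd_neq u (i : 'I_m) j t : val i != j -> upd u j t i = u i.
Proof. by rewrite ffunE => /negbTE ->. Qed.

Lemma upd_upd u j t s : upd (upd u j t) j s = upd u j s.
Proof. by apply/ffunP => i; rewrite !ffunE; case: eqP. Qed.

Lemma updC u i j s t : i != j -> upd (upd u i s) j t = upd (upd u j t) i s.
Proof.
move=> ij; apply/ffunP => k; rewrite !ffunE.
by case: eqP => [kj|//]; case: eqP => [ki|//]; rewrite -ki -kj eqxx in ij.
Qed.

Lemma upd_id u (k : 'I_m) : upd u k (u k) = u.
Proof. by apply/ffunP => i; rewrite ffunE; case: eqP => // /val_inj ->. Qed.

Lemma upd_out u j t : (m <= j)%N -> upd u j t = u.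
Proof.
by move=> mj; apply/ffunP => i; rewrite upd_neq // neq_ltn (leq_trans (ltn_ord i) mj).
Qed.

Definition ignores j g := forall u t, g (upd u j t) = g u.

Definition avg_at j g u : R := mean (fun t => g (upd u j t)).

Lemma ignores_avg_at j g : ignores j (avg_at j g).
Proof. by move=> u t; apply: eq_mean => s; rewrite upd_upd. Qed.

Lemma ignores_avg_at_other i j g : i != j -> ignores j g -> ignores j (avg_at i g).
Proof. by move=> ij gj u t; apply: eq_mean => s; rewrite -updC // gj. Qed.

Lemma avg_at_id j g : ignores j g -> avg_at j g =1 g.
Proof. by move=> gj u; rewrite /avg_at (eq_mean (fun t => gj u t)) mean_cst. Qed.

Lemma avg_atMr j g h : ignores j h ->
  avg_at j (fun v => g v * h v) =1 (fun u => avg_at j g u * h u).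
Proof.
by move=> hj u; rewrite /avg_at (eq_mean (fun t => congr1 _ (hj u t))) mulrC -meanZ;
  apply: eq_mean => t; rewrite mulrC.
Qed.

Lemma mean_avg_at j g : mean (avg_at j g) = mean g.
Proof.
have TN : (#|T|%:R : R) != 0 by rewrite pnatr_eq0 -lt0n.
rewrite /mean /avg_at /mean -mulr_suml; congr (_ / _); apply: (canLR (mulfK TN)).
rewrite mulr_suml; under [RHS]eq_bigr do rewrite mulr_natr -sumr_const.
have [jm|mj] := ltnP j m; last first.
  by apply: eq_bigr => u _; apply: eq_bigr => t _; rewrite upd_out.
pose k := Ordinal jm; rewrite !pair_bigA /=.
pose swap (p : sample * T) := (upd p.1 k p.2, p.1 k).
have swapK : involutive swap.
  move=> [u t]; rewrite /swap /= upd_upd.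
  by congr (_, _); [exact: (upd_id u k) | exact: (upd_eq u k t)].
by rewrite [RHS](reindex_inj (inv_inj swapK)).
Qed.

Lemma mean_sqr_split_at j a c : ignores j c ->
  mean (fun u => (a u - c u) ^+ 2) =
  mean (fun u => (a u - avg_at j a u) ^+ 2) + mean (fun u => (avg_at j a u - c u) ^+ 2).
Proof.
move=> cj; set b := avg_at j a.
have bcj : ignores j (fun u => b u - c u) by move=> u t; rewrite /b ignores_avg_at cj.
have cross : mean (fun u => (a u - b u) * (b u - c u)) = 0.
  rewrite -(mean_avg_at j) (eq_mean (avg_atMr _ bcj)) -(mean_cst card_sample_gt0 0).
  apply: eq_mean => u; rewrite /avg_at meanB -/(avg_at j b u) -/(avg_at j a u).
  by rewrite (avg_at_id (ignores_avg_at j a)) /b subrr mul0r.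
rewrite -[RHS]addr0 -(mulr0 2) -cross -meanZ -!meanD; apply: eq_mean => u; ring.
Qed.

Lemma mean_sqr_sub_avg_at_le j a :
  mean (fun u => (a u - avg_at j a u) ^+ 2) <= mean (fun u => a u ^+ 2).
Proof.
have := @mean_sqr_split_at j a (fun=> 0) (fun _ _ => erefl).
under eq_mean do rewrite subr0; move=> ->.
by rewrite lerDl mean_ge0 // => u; apply: sqr_ge0.
Qed.

Fixpoint avg_below j g : sample -> R :=
  if j is j'.+1 then avg_at j' (avg_below j' g) else g.

Lemma eq_avg_below j g h : g =1 h -> avg_below j g =1 avg_below j h.
Proof. by elim: j => [|j IH] //= gh u; apply: eq_mean => t; apply: IH. Qed.

Lemma avg_belowD j g h :
  avg_below j (fun v => g v + h v) =1 (fun u => avg_below j g u + avg_below j h u).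
Proof.
by elim: j => [|j IH] //= u; rewrite /avg_at -meanD; apply: eq_mean => t; apply: IH.
Qed.

Lemma ignores_avg_below j k g : (j <= k)%N -> ignores k g -> ignores k (avg_below j g).
Proof.
elim: j => [|j IH] //= jk gk; apply: ignores_avg_at_other; first by rewrite neq_ltn jk.
exact: IH (ltnW jk) gk.
Qed.

Lemma avg_below_agree j g u v : (forall i : 'I_m, (j <= i)%N -> u i = v i) ->
  avg_below j g u = avg_below j g v.
Proof.
elim: j u v => [|j IH] u v /= uv; first by congr g; apply/ffunP => i; apply: uv.
apply: eq_mean => t; apply: IH => i ji; rewrite !ffunE; case: eqP => // /eqP ij.
by apply: uv; rewrite ltn_neqAle ji eq_sym ij.
Qed.

Lemma mean_avg_below j g : mean (avg_below j g) = mean g.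
Proof. by elim: j => [|j IH] //=; rewrite mean_avg_at. Qed.

Lemma avg_below_all g u : avg_below m g u = mean g.
Proof.
have cst v : avg_below m g v = avg_below m g u.
  by apply: avg_below_agree => i; rewrite leqNgt ltn_ord.
by rewrite -(mean_avg_below m) (eq_mean cst) mean_cst // card_sample_gt0.
Qed.

Lemma mean_sqr_avg_below_le j g :
  mean (fun u => avg_below j g u ^+ 2) <= mean (fun u => g u ^+ 2).
Proof.
elim: j => [|j IH] //=; apply: le_trans IH; rewrite -[X in _ <= X](mean_avg_at j).
by apply: ler_mean => u; apply: sqr_mean_le.
Qed.

Lemma mean_sqr_increment_le j f c : ignores j c ->
  mean (fun u => (avg_below j f u - avg_below j.+1 f u) ^+ 2)
  <= mean (fun u => (f u - c u) ^+ 2).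
Proof.
move=> cj; set h := avg_below j (fun u => f u - c u).
have split_f : avg_below j f =1 (fun u => h u + avg_below j c u).
  by move=> u; rewrite -avg_belowD; apply: eq_avg_below => v; rewrite subrK.
have cbj : ignores j (avg_below j c) by apply: ignores_avg_below.
have incr u : avg_below j f u - avg_below j.+1 f u = h u - avg_at j h u.
  rewrite /= split_f /avg_at (eq_mean (fun t => split_f _)) meanD -/(avg_at j h u).
  by rewrite -/(avg_at j (avg_below j c) u) (avg_at_id cbj); ring.
under eq_mean do rewrite incr.
exact: le_trans (mean_sqr_sub_avg_at_le j h) (mean_sqr_avg_below_le j _).
Qed.

Lemma mean_sqr_centered_telescope J f :
  mean (fun u => (f u - mean f) ^+ 2) =
  \sum_(j < J) mean (fun u => (avg_below j f u - avg_below j.+1 f u) ^+ 2)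
  + mean (fun u => (avg_below J f u - mean f) ^+ 2).
Proof.
elim: J => [|J IH]; first by rewrite big_ord0 add0r.
by rewrite big_ord_recr -addrA IH (@mean_sqr_split_at J _ (fun=> mean f)).
Qed.

Theorem efron_stein f (c : nat -> sample -> R) :
  (forall j, (j < m)%N -> ignores j (c j)) ->
  mean (fun u => (f u - mean f) ^+ 2) <= \sum_(j < m) mean (fun u => (f u - c j u) ^+ 2).
Proof.
move=> cj; rewrite (mean_sqr_centered_telescope m).
under [X in _ + X]eq_mean do rewrite avg_below_all subrr expr0n.
rewrite mean_cst ?card_sample_gt0 // addr0.
by apply: ler_sum => j _; apply: mean_sqr_increment_le; apply: cj.
Qed.

Lemma ignores_coord (i k : 'I_m) (g : T -> R) : i != k -> ignores k (fun u => g (u i)).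
Proof. by move=> ik u t; rewrite upd_neq. Qed.

Lemma mean_mul_coord (k : 'I_m) (g : T -> R) h : ignores k h ->
  mean (fun u => g (u k) * h u) = mean g * mean h.
Proof.
move=> hk; rewrite -(mean_avg_at k) (eq_mean (avg_atMr _ hk)) -meanZ.
by apply: eq_mean => u; congr (_ * _); apply: eq_mean => t; rewrite upd_eq.
Qed.

Lemma mean_coord (k : 'I_m) (g : T -> R) : mean (fun u => g (u k)) = mean g.
Proof.
rewrite -[RHS]mulr1 -(mean_cst card_sample_gt0 1) -(@mean_mul_coord k) //.
by apply: eq_mean => u; rewrite mulr1.
Qed.

End ProductSpace.

(** * The second moment of the increment of X *)

Lemma exists_le_sum (R : numDomainType) (I : finType) (P Q : pred I) :
  ([exists i, P i && Q i]%:R : R) <= \sum_(i | P i) (Q i)%:R.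
Proof.
case: existsP => [[i /andP [Pi Qi]]|_]; last by rewrite sumr_ge0.
by rewrite (bigD1 i) //= Qi lerDl sumr_ge0.
Qed.

Lemma sum_ord_le_const (R : numDomainType) m (P : pred 'I_m) (F : 'I_m -> R) c :
  0 <= c -> (forall i, P i -> F i <= c) -> \sum_(i < m | P i) F i <= m%:R * c.
Proof.
move=> c0 Fc; apply: (@le_trans _ _ (\sum_(i < m) c)).
  by rewrite big_mkcond /=; apply: ler_sum => i _; case: ifP => // /Fc.
by rewrite sumr_const card_ord mulr_natl.
Qed.

Lemma sum_dvdn_succ n d : (0 < d)%N -> (\sum_(t < n) (d %| t.+1) = n %/ d)%N.
Proof.
move=> d_gt0; elim: n => [|n IH]; first by rewrite big_ord0 div0n.
by rewrite big_ord_recr /= IH divnS // addnC.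
Qed.

Lemma mean_dvdn_le (R : realFieldType) n d : (0 < d)%N ->
  mean (fun t : 'I_n => ((d %| t.+1)%N%:R : R)) <= d%:R^-1.
Proof.
move=> d_gt0; rewrite /mean -natr_sum sum_dvdn_succ // card_ord.
have [->|n_gt0] := posnP n; first by rewrite div0n mul0r invr_ge0 ler0n.
rewrite ler_pdivrMr ?ltr0n // mulrC ler_pdivlMr ?ltr0n //.
by rewrite -natrM ler_nat leq_divM.
Qed.

Section Overlap.
Variables (R : realType) (n m : nat).
Hypothesis n_gt0 : (0 < n)%N.
Local Notation sample := {ffun 'I_m -> 'I_n}.
Implicit Types (u : sample) (p q : nat) (k : 'I_m).

Let In_gt0 : (0 < #|'I_n|)%N. Proof. by rewrite card_ord. Qed.

Local Notation dvd_ind d := (fun t : 'I_n => ((d %| t.+1)%N%:R : R)).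

Definition dvdU p u (i : 'I_m) : bool := (p %| Uval u i)%N.

Definition shared p u k : bool := dvdU p u k && [exists i, (i != k) && dvdU p u i].

Definition overlap k u : R :=
  \sum_(p < n.+1 | prime p && (m < p)%N) ln (p%:R : R) * (shared p u k)%:R.

Definition sum_ln2_div_p2 : R :=
  \sum_(p < n.+1 | prime p && (m < p)%N) ln (p%:R : R) ^+ 2 / p%:R ^+ 2.

Definition sum_ln_div_p2 : R :=
  \sum_(p < n.+1 | prime p && (m < p)%N) ln (p%:R : R) / p%:R ^+ 2.

Lemma sum_ln2_div_p2_ge0 : 0 <= sum_ln2_div_p2.
Proof. by rewrite sumr_ge0 // => p _; rewrite divr_ge0 ?sqr_ge0. Qed.

Lemma sum_ln_div_p2_ge0 : 0 <= sum_ln_div_p2.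
Proof.
by rewrite sumr_ge0 // => p /andP [pp _]; rewrite divr_ge0 ?exprn_ge0 ?ln_ge0 ?ler1n ?prime_gt0.
Qed.

Lemma mean_dvdU_mul_le p q (i j : 'I_m) : (0 < p)%N -> (0 < q)%N -> (i != j) || coprime p q ->
  mean (fun u => (dvdU p u i)%:R * (dvdU q u j)%:R : R) <= (p * q)%:R^-1.
Proof.
move=> p_gt0 q_gt0; have [<- /= copq|ij _] := eqVneq i j.
  under eq_mean do rewrite -natrM mulnb /dvdU -Gauss_dvd //.
  by rewrite (mean_coord In_gt0 i (dvd_ind (p * q))) mean_dvdn_le ?muln_gt0 ?p_gt0.
rewrite (mean_mul_coord In_gt0 (dvd_ind p)); last first.
  by apply: (@ignores_coord _ _ _ j i (dvd_ind q)); rewrite eq_sym.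
rewrite (mean_coord In_gt0 j (dvd_ind q)) natrM invfM.
by rewrite ler_pM ?mean_ge0 ?mean_dvdn_le // => t; apply: ler0n.
Qed.

Lemma shared_le_sum p u k :
  (shared p u k)%:R <= \sum_(i | i != k) (dvdU p u k)%:R * (dvdU p u i)%:R :> R.
Proof. by rewrite -mulr_sumr -mulnb natrM ler_wpM2l ?ler0n ?exists_le_sum. Qed.

Lemma shared_mul_le_sum p q u k : prime p -> prime q -> p != q ->
  (shared p u k)%:R * (shared q u k)%:R <=
  \sum_(i | i != k) \sum_(j | j != k)
    (dvdU (p * q) u k)%:R * ((dvdU p u i)%:R * (dvdU q u j)%:R) :> R.
Proof.
move=> pp qp pq; have copq : coprime p q by rewrite prime_coprime // dvdn_prime2.
have andbACA (b1 b2 e1 e2 : bool) :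
  (b1 && e1)%:R * (b2 && e2)%:R = (b1 && b2)%:R * (e1%:R * e2%:R) :> R.
  by case: b1 b2 e1 e2 => [] [] [] []; rewrite /= ?mul0r ?mulr0 ?mul1r.
rewrite /shared /dvdU Gauss_dvd // andbACA.
under eq_bigr do rewrite -mulr_sumr; rewrite -mulr_sumr ler_wpM2l ?ler0n //.
under [X in _ <= X]eq_bigr do rewrite -mulr_sumr.
by rewrite -mulr_suml ler_pM ?ler0n ?exists_le_sum.
Qed.

Lemma mean_shared_le p k : prime p -> mean (fun u => (shared p u k)%:R : R) <= m%:R / p%:R ^+ 2.
Proof.
move=> pp; apply: le_trans (ler_mean (fun u => shared_le_sum p u k)) _.
rewrite mean_sum sum_ord_le_const ?invr_ge0 ?exprn_ge0 ?ler0n // => i ik.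
by rewrite expr2 -natrM mean_dvdU_mul_le ?prime_gt0 // eq_sym ik.
Qed.

Lemma mean_shared_mul_le p q k : prime p -> prime q ->
  mean (fun u => (shared p u k)%:R * (shared q u k)%:R : R) <=
  (p == q)%:R * (m%:R / p%:R ^+ 2) + (m%:R / p%:R ^+ 2) * (m%:R / q%:R ^+ 2).
Proof.
move=> pp qp; have [<-|pq] := eqVneq p q.
  under eq_mean do rewrite -natrM mulnb andbb.
  rewrite mul1r (le_trans (mean_shared_le k pp)) // lerDl.
  by rewrite mulr_ge0 // divr_ge0 ?exprn_ge0 ?ler0n.
apply: le_trans (ler_mean (fun u => shared_mul_le_sum u k pp qp pq)) _.
have -> : m%:R / p%:R ^+ 2 * (m%:R / q%:R ^+ 2) = m%:R * (m%:R * ((p * q)%N%:R ^+ 2)^-1) :> R.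
  by rewrite natrM exprMn mulrACA -invfM mulrA.
rewrite mul0r add0r mean_sum sum_ord_le_const ?mulr_ge0 ?invr_ge0 ?exprn_ge0 ?ler0n // => i ik.
rewrite mean_sum sum_ord_le_const ?invr_ge0 ?exprn_ge0 ?ler0n // => j jk.
rewrite (mean_mul_coord In_gt0 (dvd_ind (p * q))); last first.
  by move=> u t; rewrite /dvdU /Uval !upd_neq.
rewrite expr2 invfM ler_pM ?mean_ge0 ?mean_dvdn_le ?muln_gt0 ?prime_gt0 //.
  by move=> u; rewrite mulr_ge0 ?ler0n.
by rewrite mean_dvdU_mul_le ?prime_gt0 // orbC prime_coprime // dvdn_prime2 // pq.
Qed.

Lemma mean_overlap_sqr_le k :
  mean (fun u => overlap k u ^+ 2) <= m%:R * sum_ln2_div_p2 + (m%:R * sum_ln_div_p2) ^+ 2.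
Proof.
pose w (p : 'I_n.+1) : R := ln p%:R; pose a (p : 'I_n.+1) : R := m%:R / p%:R ^+ 2.
have w_ge0 (p : 'I_n.+1) : prime p -> 0 <= w p by move=> pp; rewrite ln_ge0 // ler1n prime_gt0.
rewrite /overlap; under eq_mean do rewrite expr2 big_distrlr /=.
rewrite mean_sum; under eq_bigr do rewrite mean_sum.
apply: (@le_trans _ _ (\sum_(p < n.+1 | prime p && (m < p)%N) \sum_(q < n.+1 | prime q && (m < q)%N)
   w p * w q * ((p == q)%:R * a p + a p * a q))).
  apply: ler_sum => p /andP [pp _]; apply: ler_sum => q /andP [qp _].
  rewrite (eq_mean (fun u => mulrACA _ _ _ _)) meanZ ler_wpM2l ?mulr_ge0 ?w_ge0 //.
  exact: mean_shared_mul_le.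
have -> : m%:R * sum_ln2_div_p2 = \sum_(p < n.+1 | prime p && (m < p)%N) w p * w p * a p.
  by rewrite mulr_sumr; apply: eq_bigr => p _; rewrite /w /a; ring.
have -> : m%:R * sum_ln_div_p2 = \sum_(p < n.+1 | prime p && (m < p)%N) w p * a p.
  by rewrite mulr_sumr; apply: eq_bigr => p _; rewrite /w /a; ring.
rewrite expr2 big_distrlr -big_split /=; apply: ler_sum => p Pp.
under eq_bigr do rewrite mulrDr; rewrite big_split lerD //=.
  rewrite (bigD1 p) //= eqxx mul1r big1 ?addr0 // => q /andP [_ qp].
  by rewrite eq_sym (negbTE qp) mul0r mulr0.
by under eq_bigr do rewrite mulrACA.
Qed.

End Overlap.

Lemma lambda_gt0 p x : prime p -> (0 < x)%N -> (0 < lambda p x)%N = (p %| x)%N.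
Proof. by move=> pp x_gt0; rewrite /lambda logn_gt0 mem_primes pp x_gt0. Qed.

Lemma bigmax_gt0 (I : finType) (F : I -> nat) : (0 < \max_i F i)%N = [exists i, 0 < F i]%N.
Proof.
apply/idP/idP => [|/existsP [i Fi]]; last exact: leq_trans Fi (leq_bigmax i).
apply: contraTT => /existsPn F0; rewrite -leqNgt; apply/bigmax_leqP => i _.
by rewrite leqNgt F0.
Qed.

Lemma exists_split (I : finType) (P : pred I) k :
  [exists i, P i] = P k || [exists i, (i != k) && P i].
Proof.
apply/existsP/orP => [[i Pi]|[Pk|/existsP [i /andP [_ Pi]]]]; [|by exists k|by exists i].
by case: (eqVneq i k) => [<-|ik]; [left|right; apply/existsP; exists i; rewrite ik].
Qed.

Lemma sum_sub_exists_reset (R : comPzRingType) (I : finType) (b c : pred I) k :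
  (forall i, i != k -> c i = b i) -> c k = false ->
  ((\sum_i b i)%N%:R - [exists i, b i]%:R) - ((\sum_i c i)%N%:R - [exists i, c i]%:R)
  = (b k && [exists i, (i != k) && b i])%:R :> R.
Proof.
move=> cb ck; rewrite (bigD1 k) //= [X in _ - (X%:R - _)](bigD1 k) //=.
rewrite (exists_split b k) (exists_split c k) ck.
have -> : (\sum_(i | i != k) c i = \sum_(i | i != k) b i)%N by apply: eq_bigr => i /cb ->.
have -> : [exists i, (i != k) && c i] = [exists i, (i != k) && b i].
  by apply: eq_existsb => i; case: (eqVneq i k) => // /cb ->.
by case: (b k); case: [exists _, _]; rewrite /= !natrD; ring.
Qed.

Section Variance.
Variables (R : realType) (n m : nat).
Hypothesis n_gt0 : (0 < n)%N.
Local Notation sample := {ffun 'I_m -> 'I_n}.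

Lemma Xsum_sub_upd (u : sample) (k : 'I_m) (t0 : 'I_n) : val t0 = 0%N ->
  Xsum R u - Xsum R (upd u k t0) = overlap R k u.
Proof.
move=> t00; rewrite /Xsum /overlap -sumrB; apply: eq_bigr => p /andP [pp _].
rewrite -mulrBr; congr (_ * _).
have lam (v : sample) i : (0 < lambda p (Uval v i))%N = dvdU p v i by exact: lambda_gt0.
rewrite !bigmax_gt0.
under eq_bigr do rewrite lam.
under [in X in _ - (X%:R - _)]eq_bigr do rewrite lam.
under eq_existsb do rewrite lam.
under [in X in _ - (_ - X%:R)]eq_existsb do rewrite lam.
apply: sum_sub_exists_reset => [i ik|]; first by rewrite /dvdU /Uval upd_neq.
by rewrite /dvdU /Uval upd_eq t00 Euclid_dvd1.
Qed.

Lemma Var_Xsum_le_prime_sums :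
  Var (@Xsum R n m) <= m%:R * (m%:R * sum_ln2_div_p2 R n m + (m%:R * sum_ln_div_p2 R n m) ^+ 2).
Proof.
pose t0 : 'I_n := Ordinal n_gt0.
have In_gt0 : (0 < #|'I_n|)%N by rewrite card_ord.
apply: le_trans (@efron_stein _ _ _ In_gt0 (@Xsum R n m) (fun j u => Xsum R (upd u j t0)) _) _.
  by move=> j _ u t; rewrite upd_upd.
apply: sum_ord_le_const => [|k _].
  by rewrite addr_ge0 ?sqr_ge0 // mulr_ge0 ?ler0n ?sum_ln2_div_p2_ge0.
under eq_mean do rewrite Xsum_sub_upd //.
exact: mean_overlap_sqr_le.
Qed.

End Variance.

(** * Sums over primes *)

Lemma coprime_fact p x : prime p -> (x < p)%N -> coprime p x`!.
Proof.
move=> pp; elim: x => [|x IH] xp; first by rewrite coprimen1.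
by rewrite factS coprimeMr IH 1?ltnW // prime_coprime // gtnNdvd.
Qed.

Lemma prime_dvd_central_bin p x : prime p -> (x < p <= 2 * x)%N -> (p %| 'C(2 * x, x))%N.
Proof.
move=> pp /andP [xp p2x]; have x2x : (x <= 2 * x)%N by rewrite leq_pmull.
have := bin_fact x2x; rewrite (_ : 2 * x - x = x)%N; last by lia.
move=> fact_eq; have cop : coprime p (x`! * x`!) by rewrite coprimeMr coprime_fact.
by rewrite -(Gauss_dvdl _ cop) fact_eq dvdn_fact // prime_gt0.
Qed.

Lemma prod_primes_dvdn K N (P : pred nat) : (forall p, P p -> prime p && (p %| N)%N) ->
  (\prod_(p < K | P p) p %| N)%N.
Proof.
move=> PN; elim: K => [|K IH]; first by rewrite big_ord0 dvd1n.
rewrite big_mkcond big_ord_recr /= -big_mkcond.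
case: ifP => [/PN /andP [pK dK]|_]; last by rewrite muln1.
rewrite Gauss_dvd ?IH ?dK // coprime_sym prime_coprime // Euclid_dvd_prod // big1 // => p.
by case/PN/andP => pp _; rewrite gtnNdvd ?prime_gt0.
Qed.

Lemma central_bin_le x : ('C(2 * x, x) <= 4 ^ x)%N.
Proof.
have -> : (4 ^ x = \sum_(i < (2 * x).+1) 'C(2 * x, i))%N.
  rewrite (_ : 4 = 2 ^ 2)%N // -expnM -(addn1 1) expnDn; apply: eq_bigr => i _.
  by rewrite !exp1n !muln1.
have x_lt : (x < (2 * x).+1)%N by rewrite ltnS leq_pmull.
by rewrite (bigD1 (Ordinal x_lt)) //= leq_addr.
Qed.

Lemma prod_primes_between_le x K :
  (\prod_(p < K | prime p && (x < p <= 2 * x)) p <= 4 ^ x)%N.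
Proof.
apply: leq_trans (central_bin_le x); apply: dvdn_leq; first by rewrite bin_gt0 leq_pmull.
apply: (@prod_primes_dvdn _ _ (fun p => prime p && (x < p <= 2 * x)%N)) => p /andP [pp px].
by rewrite pp prime_dvd_central_bin.
Qed.

Lemma ln_prod_nat (R : realType) (I : Type) (r : seq I) (P : pred I) (f : I -> nat) :
  (forall i, P i -> 0 < f i)%N ->
  ln ((\prod_(i <- r | P i) f i)%N%:R : R) = \sum_(i <- r | P i) ln (f i)%:R.
Proof.
move=> f_gt0; rewrite natr_prod -[RHS]expRK expR_sum; congr ln.
by apply: eq_bigr => i Pi; rewrite lnK // posrE ltr0n f_gt0.
Qed.

Lemma sum_ln_primes_between_le (R : realType) x K :
  \sum_(p < K | prime p && (x < p <= 2 * x)%N) ln (p%:R : R) <= x%:R * ln 4.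
Proof.
rewrite -ln_prod_nat; last by move=> p /andP [/prime_gt0].
rewrite mulr_natl -lnXn // -natrX ler_ln ?posrE ?ltr0n ?expn_gt0 //.
  by rewrite ler_nat prod_primes_between_le.
by rewrite prodn_cond_gt0 // => p /andP [/prime_gt0].
Qed.

Lemma sum_ln2_div_p2_between_le (R : realType) x K : (0 < x)%N ->
  \sum_(p < K | prime p && (x < p <= 2 * x)%N) ln (p%:R : R) ^+ 2 / p%:R ^+ 2
  <= ln 4 * ln (2 * x)%:R / x%:R.
Proof.
move=> x_gt0; set L : R := ln (2 * x)%:R.
have L_ge0 : 0 <= L by rewrite ln_ge0 // ler1n muln_gt0.
apply: (@le_trans _ _
  (\sum_(p < K | prime p && (x < p <= 2 * x)%N) ln (p%:R : R) * (L / x%:R ^+ 2))).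
  apply: ler_sum => p /andP [pp /andP [xp p2x]]; have p_gt0 := prime_gt0 pp.
  rewrite expr2 -mulrA ler_wpM2l ?ln_ge0 ?ler1n // ler_pM ?invr_ge0 ?exprn_ge0 ?ln_ge0 ?ler1n //.
    by rewrite ler_ln ?posrE ?ltr0n ?muln_gt0 ?ler_nat.
  by rewrite -!natrX lef_pV2 ?posrE ?ltr0n ?expn_gt0 ?x_gt0 ?p_gt0 // ler_nat leq_sqr ltnW.
rewrite -mulr_suml; apply: le_trans (ler_wpM2r _ (sum_ln_primes_between_le R x K)) _.
  by rewrite divr_ge0 ?exprn_ge0 ?ler0n.
have x_neq0 : (x%:R : R) != 0 by rewrite pnatr_eq0 -lt0n.
by rewrite [leLHS](_ : _ = ln 4 * L / x%:R) //; field.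
Qed.

Lemma ln_double_pow2_le (R : realType) j m : (2 <= m)%N ->
  ln (2 * (2 ^ j * m))%:R <= j.+2%:R * ln (m%:R : R).
Proof.
move=> m2; rewrite mulnA -expnS natrM natrX lnM ?posrE ?exprn_gt0 ?ltr0n //; last by lia.
rewrite lnXn // -[j.+2]addn1 natrD mulrDl mul1r mulr_natl lerD2r lerMn2r.
by rewrite ler_ln ?posrE ?ltr0n ?ler_nat ?orbT //; lia.
Qed.

Lemma sum_le_sum_blocks (R : numDomainType) (I J : finType) (Q : pred I) (B : J -> pred I)
    (f : I -> R) :
  (forall i, Q i -> 0 <= f i) -> (forall i, Q i -> exists j, B j i) ->
  \sum_(i | Q i) f i <= \sum_j \sum_(i | Q i && B j i) f i.
Proof.
move=> f_ge0 QB; under [X in _ <= X]eq_bigr do rewrite big_mkcond /=.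
rewrite exchange_big /= big_mkcond /=; apply: ler_sum => i _.
case Qi: (Q i); last by rewrite big1.
have [j Bji] := QB i Qi; rewrite (bigD1 j) //= Bji lerDl.
by apply: sumr_ge0 => j' _; case: ifP => // _; apply: f_ge0.
Qed.

Lemma exists_dyadic_block m p J : (m < p <= 2 ^ J * m)%N ->
  exists j : 'I_J, (2 ^ j * m < p <= 2 * (2 ^ j * m))%N.
Proof.
elim: J => [|J IH] /andP [mp pJ]; first by rewrite mul1n leqNgt mp in pJ.
have [pJ'|pJ'] := leqP p (2 ^ J * m).
  by have [j pj] := IH (introT andP (conj mp pJ')); exists (widen_ord (leqnSn J) j).
by exists ord_max; rewrite /= pJ' mulnA -expnS.
Qed.

Lemma sum_linear_over_pow2 (R : realFieldType) J :
  \sum_(j < J) j.+2%:R / (2 : R) ^+ j = 6 - (2 * J + 6)%:R / 2 ^+ J.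
Proof.
elim: J => [|J IH]; first by rewrite big_ord0 expr0 divr1; lra.
have pow2_neq0 : (2 : R) ^+ J != 0 by rewrite expf_neq0 // pnatr_eq0.
by rewrite big_ord_recr /= IH exprS !natrD !natrM; field.
Qed.

(* The block (2^j m, 2^(j+1) m] contributes at most (j+2)/2^j times
   ln 4 ln m / m, and these weights sum to less than 6. *)
Lemma sum_ln2_div_p2_le (R : realType) n m : (2 <= m)%N ->
  sum_ln2_div_p2 R n m <= 6 * ln 4 * ln (m%:R : R) / m%:R.
Proof.
move=> m2; set c : R := ln 4 * ln m%:R / m%:R.
have c_ge0 : 0 <= c by rewrite /c !mulr_ge0 ?invr_ge0 ?ler0n ?ln_ge0 ?ler1n // ltnW.
pose B (j : 'I_n) (p : 'I_n.+1) := (2 ^ j * m < p <= 2 * (2 ^ j * m))%N.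
apply: le_trans (@sum_le_sum_blocks _ _ _ _ B _ _ _) _.
- by move=> p _; rewrite divr_ge0 ?sqr_ge0.
- move=> p /andP [_ mp]; apply: exists_dyadic_block; rewrite mp /=.
  have := ltn_ord p; have := ltn_expl n (isT : (1 < 2)%N).
  have : (2 ^ n <= 2 ^ n * m)%N by rewrite leq_pmulr //; lia.
  lia.
apply: (@le_trans _ _ (\sum_(j < n) c * (j.+2%:R / 2 ^+ j))).
  apply: ler_sum => j _; have m_le : (m <= 2 ^ j * m)%N by rewrite leq_pmull ?expn_gt0.
  rewrite (eq_bigl (fun p : 'I_n.+1 => prime p && B j p)); last first.
    move=> p; rewrite /B -andbA; case: (prime p) => //=.
    by case/boolP: (2 ^ j * m < p)%N => /= jp; rewrite ?andbF // (leq_ltn_trans m_le jp).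
  apply: le_trans (sum_ln2_div_p2_between_le _ _ _) _; first by rewrite muln_gt0 expn_gt0; lia.
  have -> : c * (j.+2%:R / 2 ^+ j) = ln 4 * (j.+2%:R * ln m%:R) / (2 ^ j * m)%:R.
    by rewrite /c natrM natrX; field; rewrite expf_neq0 ?pnatr_eq0 //; lia.
  rewrite ler_wpM2r ?invr_ge0 ?ler0n // ler_wpM2l ?ln_double_pow2_le //.
  by rewrite ln_ge0 //; lra.
rewrite -mulr_sumr sum_linear_over_pow2.
have -> : 6 * ln 4 * ln m%:R / m%:R = c * 6 by rewrite /c; ring.
rewrite ler_wpM2l // lerBlDr lerDl divr_ge0 ?exprn_ge0 ?ler0n //.
Qed.

Lemma sum_ln_div_p2_le (R : realType) n m : (2 <= m)%N ->
  sum_ln_div_p2 R n m * ln (m%:R : R) <= sum_ln2_div_p2 R n m.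
Proof.
move=> m2; rewrite mulr_suml; apply: ler_sum => p /andP [pp mp].
rewrite mulrAC [ln _ ^+ 2]expr2 ler_wpM2r ?invr_ge0 ?exprn_ge0 ?ler0n //.
rewrite ler_wpM2l ?ln_ge0 ?ler1n ?prime_gt0 //.
by rewrite ler_ln ?posrE ?ltr0n ?ler_nat ?(ltnW mp) ?(prime_gt0 pp) //; lia.
Qed.

Lemma Var_ge0 (R : realType) n m (f : {ffun 'I_m -> 'I_n} -> R) : 0 <= Var f.
Proof. by apply: mean_ge0 => u; apply: sqr_ge0. Qed.

Lemma Var_Xsum_le_m_ln_m (R : realType) n m : (0 < n)%N -> (2 <= m)%N ->
  Var (@Xsum R n m) <= (6 * ln 4 + (6 * ln 4) ^+ 2 / ln 2) * (m%:R * ln (m%:R : R)).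
Proof.
move=> n_gt0 m2; apply: le_trans (@Var_Xsum_le_prime_sums R n m n_gt0) _.
set C := 6 * ln (4 : R); set L := ln (m%:R : R); set M : R := m%:R.
set s1 := sum_ln2_div_p2 R n m; set s2 := sum_ln_div_p2 R n m.
have M_gt0 : 0 < M by rewrite ltr0n; lia.
have ln2_gt0 : 0 < ln (2 : R) by rewrite ln_gt0 //; lra.
have ln2_le : ln 2 <= L by rewrite ler_ln ?posrE ?ltr0n ?ler_nat //; lia.
have L_gt0 : 0 < L := lt_le_trans ln2_gt0 ln2_le.
have Ms1 : M * s1 <= C * L by rewrite mulrC -ler_pdivlMr // sum_ln2_div_p2_le.
have Ms2 : M * s2 <= C.
  rewrite -(ler_pM2r L_gt0) -mulrA; apply: le_trans Ms1.
  by rewrite ler_wpM2l ?(ltW M_gt0) // sum_ln_div_p2_le.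
have Ms2_sqr : (M * s2) ^+ 2 <= C ^+ 2 / ln 2 * L.
  apply: le_trans (_ : C ^+ 2 <= _).
    by rewrite ler_pXn2r ?nnegrE ?mulr_ge0 ?(ltW M_gt0) ?sum_ln_div_p2_ge0 ?ln_ge0 //; lra.
  by rewrite mulrAC ler_pdivlMr // ler_wpM2l ?sqr_ge0.
rewrite [X in _ <= X](_ : _ = M * (C * L + C ^+ 2 / ln 2 * L)); last by ring.
by rewrite ler_wpM2l ?(ltW M_gt0) // lerD.
Qed.

Unset Implicit Arguments.

Theorem lemma6p3 (R : realType) (mn : nat -> nat)
  (Hinf : forall M : nat, exists N : nat, forall n : nat, (N <= n)%N -> (M <= mn n)%N)
  (Hsmall : forall eps : R, 0 < eps ->
     exists N : nat, forall n : nat, (N <= n)%N -> (mn n)%:R <= eps * n%:R) :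
  exists C : R, exists N : nat, forall n : nat, (N <= n)%N ->
    `| Var (@Xsum R n (mn n)) | <= C * ((mn n)%:R * ln ((mn n)%:R : R)).
Proof.
(* The bound holds for every n with m_n >= 2. *)
have [N HN] := Hinf 2%N.
exists (6 * ln 4 + (6 * ln 4) ^+ 2 / ln 2), (maxn N 1) => n.
rewrite geq_max => /andP [Nn n_gt0].
by rewrite ger0_norm ?Var_ge0 // Var_Xsum_le_m_ln_m // HN.
Qed.
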